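(* Let $P \subseteq \mathbb{R}^7$ be an associative $3$-plane. Then the $3$-dimensional subspace $\Psi(P) = \mathrm{Span}\{\Psi_{uv} : u,v \in P\}$ of $\Lambda^2(\mathbb{R}^7)$ is a Lie subalgebra isomorphic to $\mathfrak{so}(3)$.
   Context: Equip $\mathbb{R}^7$ with its standard inner product, orientation and basis. Let $\varphi = e_{123} - e_{167} - e_{527} - e_{563} - e_{415} - e_{426} - e_{437}$ ($e_{ijk} = e_i\wedge e_j\wedge e_k$), $\psi = \star\varphi = e_{4567} - e_{4523} - e_{4163} - e_{4127} - e_{2637} - e_{1537} - e_{1526}$, and define $\times$ by $\langle u \times v, w \rangle = \varphi(u,v,w)$. A $3$-dimensional subspace is associative if closed under $\times$. $\Psi_{uv}$ is the skew bilinear form $(x,y)\mapsto \psi(u,v,x,y)$. Skew bilinear forms $X$ are identified with skew-adjoint operators via $X(x,y) = \langle X(x), y \rangle$, so $\Lambda^2(\mathbb{R}^7) = \mathfrak{so}(7)$ with bracket the commutator. *)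

(* R : realType, vectors are row vectors 'rV[R]_7,
   subspaces of R^7 are row spaces of matrices (mxalgebra). *)
From HB Require Import structures.
From mathcomp Require Import all_boot all_order all_algebra.
From mathcomp Require Import reals.
Set Implicit Arguments. Unset Strict Implicit. Unset Printing Implicit Defensive.
Import Order.TTheory GRing.Theory Num.Theory.
Local Open Scope ring_scope.

Section G2.
Variable R : realType.
Local Notation vec := 'rV[R]_7.

(* basis index: e_n (n = 1..7) is coordinate n-1 *)
Definition ix (n : nat) : 'I_7 := inord n.-1.

Definition ev (n : nat) : vec := delta_mx 0 (ix n).

Definition dot (u v : vec) : R := \sum_(k < 7) u 0 k * v 0 k.

(* (e_i ^ e_j ^ e_k)(u,v,w) = det [ x_a(e-index) ] *)
Definition e3 (i j k : nat) (u v w : vec) : R :=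
  let vs := [tuple u; v; w] in
  let js := [tuple ix i; ix j; ix k] in
  \det (\matrix_(a < 3, b < 3) (tnth vs b) 0 (tnth js a)).

Definition e4 (i j k l : nat) (u v w x : vec) : R :=
  let vs := [tuple u; v; w; x] in
  let js := [tuple ix i; ix j; ix k; ix l] in
  \det (\matrix_(a < 4, b < 4) (tnth vs b) 0 (tnth js a)).

Definition phi (u v w : vec) : R :=
  e3 1 2 3 u v w - e3 1 6 7 u v w - e3 5 2 7 u v w - e3 5 6 3 u v w
  - e3 4 1 5 u v w - e3 4 2 6 u v w - e3 4 3 7 u v w.

Definition psi (u v w x : vec) : R :=
  e4 4 5 6 7 u v w x - e4 4 5 2 3 u v w x - e4 4 1 6 3 u v w x
  - e4 4 1 2 7 u v w x - e4 2 6 3 7 u v w x - e4 1 5 3 7 u v w x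
  - e4 1 5 2 6 u v w x.

(* cross product: <u x v, w> = phi(u,v,w); coordinates are phi(u,v,e_k) *)
Definition cross (u v : vec) : vec := \row_k phi u v (delta_mx 0 k).

Definition associative_plane (P : 'M[R]_7) : Prop :=
  \rank P = 3%N /\
  forall u v : vec, (u <= P)%MS -> (v <= P)%MS -> (cross u v <= P)%MS.

(* Psi_{uv} as a skew-adjoint operator acting on column vectors:
   column j is Psi_{uv}(e_j), whose i-th coordinate is
   <Psi_{uv}(e_j), e_i> = psi(u,v,e_j,e_i). *)
Definition Psi (u v : vec) : 'M[R]_7 :=
  \matrix_(i < 7, j < 7) psi u v (delta_mx 0 j) (delta_mx 0 i).

Definition lie {n : nat} (A B : 'M[R]_n) : 'M[R]_n := A *m B - B *m A.

Definition PsiSpan (P : 'M[R]_7) (X : 'M[R]_7) : Prop :=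
  exists (n : nat) (c : 'I_n -> R) (u v : 'I_n -> vec),
    (forall i, (u i <= P)%MS /\ (v i <= P)%MS) /\
    X = \sum_(i < n) c i *: Psi (u i) (v i).

Definition so3 (X : 'M[R]_3) : Prop := X^T = - X.

End G2.

From HB Require Import structures.
From mathcomp Require Import all_boot all_order all_algebra.
From mathcomp Require Import reals.
From mathcomp Require Import ring lra.
Import Order.TTheory GRing.Theory Num.Theory.
Local Open Scope ring_scope.
Set Implicit Arguments. Unset Strict Implicit. Unset Printing Implicit Defensive.

(** Pick orthonormal e1, e2 in P.  As P is associative, e3 = e1 x e2 lies in
   P; it is a unit vector orthogonal to e1 and e2, so (e1, e2, e3) is an
   orthonormal basis of the 3-plane P.  Since Psi is bilinear and alternating,
   every Psi_uv with u, v in P is a combination of A1 = Psi_{e2 e3},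
   A2 = Psi_{e3 e1} and A3 = Psi_{e1 e2}.  A coordinate computation gives
   [Psi_{v, u x v}, Psi_{u x v, u}] = 2 |u ^ v|^2 Psi_uv, hence
   [A1, A2] = 2 A3 and its cyclic permutations: the brackets of so(3) in the
   basis 2 L_i.  Finally tr (Psi_uv)^2 = -4 |u ^ v|^2 shows A1 <> 0, and the
   bracket relations then force A1, A2, A3 to be linearly independent. *)

Definition o0 : 'I_7 := @Ordinal 7 0 isT.
Definition o1 : 'I_7 := @Ordinal 7 1 isT.
Definition o2 : 'I_7 := @Ordinal 7 2 isT.
Definition o3 : 'I_7 := @Ordinal 7 3 isT.
Definition o4 : 'I_7 := @Ordinal 7 4 isT.
Definition o5 : 'I_7 := @Ordinal 7 5 isT.
Definition o6 : 'I_7 := @Ordinal 7 6 isT.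

Lemma ord7_ind (P : 'I_7 -> Prop) :
  P o0 -> P o1 -> P o2 -> P o3 -> P o4 -> P o5 -> P o6 -> forall i, P i.
Proof.
move=> ? ? ? ? ? ? ? [[|[|[|[|[|[|[|//]]]]]]] lti];
  by rewrite (bool_irrelevance lti isT).
Qed.

Lemma sum_ord7 (V : nmodType) (F : 'I_7 -> V) :
  \sum_(k < 7) F k = F o0 + F o1 + F o2 + F o3 + F o4 + F o5 + F o6.
Proof.
rewrite !big_ord_recr big_ord0 /= add0r.
by congr (_ + _ + _ + _ + _ + _ + _); congr F; apply: val_inj.
Qed.

Lemma ixE :
  (ix 1 = o0) * (ix 2 = o1) * (ix 3 = o2) * (ix 4 = o3) * (ix 5 = o4)
  * (ix 6 = o5) * (ix 7 = o6).
Proof. by do !split; apply: val_inj; rewrite /= inordK. Qed.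

Definition q0 : 'I_3 := @Ordinal 3 0 isT.
Definition q1 : 'I_3 := @Ordinal 3 1 isT.
Definition q2 : 'I_3 := @Ordinal 3 2 isT.

Lemma ord3_ind (P : 'I_3 -> Prop) : P q0 -> P q1 -> P q2 -> forall i, P i.
Proof.
by move=> ? ? ? [[|[|[|//]]] lti]; rewrite (bool_irrelevance lti isT).
Qed.

Lemma sum_ord3 (V : nmodType) (F : 'I_3 -> V) : \sum_(k < 3) F k = F q0 + F q1 + F q2.
Proof.
by rewrite !big_ord_recr big_ord0 /= add0r; congr (_ + _ + _); congr F; apply: val_inj.
Qed.

Lemma expand_det_row0 (R : comRingType) n (f : 'I_n.+1 -> 'I_n.+1 -> R) :
  \det (\matrix_(i, j) f i j) =
  \sum_(j < n.+1) (-1) ^+ j * f 0 j * \det (\matrix_(i, k) f (lift 0 i) (lift j k)).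
Proof.
rewrite (expand_det_row _ 0); apply: eq_bigr => j _.
rewrite mxE /cofactor add0n mulrCA mulrA; congr (_ * \det _).
by apply/matrixP => i k; rewrite !mxE.
Qed.

Section Coordinates.
Variable R : realType.
Implicit Types u v w x y : 'rV[R]_7.

Definition wedge u v (a b : 'I_7) : R := u 0 a * v 0 b - u 0 b * v 0 a.

Lemma e3_wedge a b c u v w : e3 a b c u v w =
  wedge u v (ix a) (ix b) * w 0 (ix c) - wedge u v (ix a) (ix c) * w 0 (ix b)
  + wedge u v (ix b) (ix c) * w 0 (ix a).
Proof.
rewrite /e3; do ![rewrite expand_det_row0 | rewrite big_ord_recr | rewrite big_ord0].
by rewrite !det_mx00 !(tnth_nth (0 : 'rV[R]_7)) !(tnth_nth (0 : 'I_7)) /= /wedge; ring.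
Qed.

Lemma e4_expand a b c d u v x y : e4 a b c d u v x y =
  u 0 (ix a) * e3 b c d v x y - v 0 (ix a) * e3 b c d u x y
  + x 0 (ix a) * e3 b c d u v y - y 0 (ix a) * e3 b c d u v x.
Proof.
rewrite /e4 expand_det_row0 !big_ord_recr big_ord0 /= add0r !exprS expr0.
rewrite !mulr1 !(mulN1r, opprK) !mul1r !mulNr.
congr (_ * _ + - (_ * _) + _ * _ + - (_ * _)); rewrite /e3; congr (\det _).
all: by apply/matrixP => [[[|[|[|//]]] ?] [[|[|[|//]]] ?]]; rewrite !mxE.
Qed.

Lemma e4_wedge a b c d u v x y : e4 a b c d u v x y =
  wedge u v (ix a) (ix b) * wedge x y (ix c) (ix d)
  - wedge u v (ix a) (ix c) * wedge x y (ix b) (ix d)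
  + wedge u v (ix a) (ix d) * wedge x y (ix b) (ix c)
  + wedge u v (ix b) (ix c) * wedge x y (ix a) (ix d)
  - wedge u v (ix b) (ix d) * wedge x y (ix a) (ix c)
  + wedge u v (ix c) (ix d) * wedge x y (ix a) (ix b).
Proof. by rewrite e4_expand !e3_wedge /wedge; ring. Qed.

Definition cross_coord u v (k : nat) : R :=
  let w := wedge u v in
  match k with
  | 0%N => w o1 o2 + w o3 o4 - w o5 o6
  | 1%N => - w o0 o2 + w o3 o5 + w o4 o6
  | 2%N => w o0 o1 + w o3 o6 - w o4 o5
  | 3%N => - w o0 o4 - w o1 o5 - w o2 o6
  | 4%N => w o0 o3 - w o1 o6 + w o2 o5
  | 5%N => w o0 o6 + w o1 o3 - w o2 o4
  | _ => - w o0 o5 + w o1 o4 + w o2 o3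
  end.

Lemma crossE u v k : cross u v 0 k = cross_coord u v k.
Proof. by rewrite mxE /phi !e3_wedge !ixE !mxE; elim/ord7_ind: k; rewrite /= /wedge; ring. Qed.

Definition Psi_upper u v (i j : nat) : R :=
  let w := wedge u v in
  match i, j with
  | 0%N, 1%N => w o3 o6 - w o4 o5
  | 0%N, 2%N => - w o3 o5 - w o4 o6
  | 0%N, 3%N => - w o1 o6 + w o2 o5
  | 0%N, 4%N => w o1 o5 + w o2 o6
  | 0%N, 5%N => - w o1 o4 - w o2 o3
  | 0%N, 6%N => w o1 o3 - w o2 o4
  | 1%N, 2%N => w o3 o4 - w o5 o6
  | 1%N, 3%N => w o0 o6 - w o2 o4
  | 1%N, 4%N => - w o0 o5 + w o2 o3
  | 1%N, 5%N => w o0 o4 + w o2 o6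
  | 1%N, 6%N => - w o0 o3 - w o2 o5
  | 2%N, 3%N => - w o0 o5 + w o1 o4
  | 2%N, 4%N => - w o0 o6 - w o1 o3
  | 2%N, 5%N => w o0 o3 - w o1 o6
  | 2%N, 6%N => w o0 o4 + w o1 o5
  | 3%N, 4%N => w o1 o2 - w o5 o6
  | 3%N, 5%N => - w o0 o2 + w o4 o6
  | 3%N, 6%N => w o0 o1 - w o4 o5
  | 4%N, 5%N => - w o0 o1 - w o3 o6
  | 4%N, 6%N => - w o0 o2 + w o3 o5
  | 5%N, 6%N => - w o1 o2 - w o3 o4
  | _, _ => 0
  end.

Definition Psi_coord u v (i j : nat) : R :=
  if (i < j)%N then Psi_upper u v i j
  else if (j < i)%N then - Psi_upper u v j i else 0.

Lemma PsiE u v : Psi u v = \matrix_(i, j) Psi_coord u v i j.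
Proof.
apply/matrixP => i j; rewrite !mxE /psi !e4_wedge !ixE /wedge !mxE.
by elim/ord7_ind: i; elim/ord7_ind: j; rewrite /Psi_coord /= /wedge; ring.
Qed.

End Coordinates.

Section VectorAlgebra.
Variable R : realType.
Implicit Types u v x y z : 'rV[R]_7.

Lemma dotC u v : dot u v = dot v u.
Proof. by apply: eq_bigr => k _; rewrite mulrC. Qed.

Lemma dotBl x y z : dot (x - y) z = dot x z - dot y z.
Proof. by rewrite -sumrB; apply: eq_bigr => k _; rewrite !mxE mulrBl. Qed.

Lemma dotZl a x y : dot (a *: x) y = a * dot x y.
Proof. by rewrite mulr_sumr; apply: eq_bigr => k _; rewrite mxE mulrA. Qed.

Lemma dotZr a x y : dot x (a *: y) = a * dot x y.
Proof. by rewrite dotC dotZl dotC. Qed.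

Lemma dot_ge0 x : 0 <= dot x x.
Proof. by apply: sumr_ge0 => k _; rewrite -expr2 sqr_ge0. Qed.

Lemma dot_eq0 x : (dot x x == 0) = (x == 0).
Proof.
apply/idP/eqP => [/eqP|->]; last by rewrite /dot big1 // => k _; rewrite mxE mul0r.
move=> /psumr_eq0P x0; apply/rowP => k; rewrite mxE.
by apply/eqP; rewrite -sqrf_eq0 expr2 x0 // => i _; rewrite -expr2 sqr_ge0.
Qed.

Lemma dot_normalize x : x != 0 ->
  dot ((Num.sqrt (dot x x))^-1 *: x) ((Num.sqrt (dot x x))^-1 *: x) = 1.
Proof.
move=> x_neq0; rewrite dotZl dotZr mulrA -expr2 exprVn sqr_sqrtr ?dot_ge0 //.
by rewrite mulVf ?dot_eq0.
Qed.

Lemma dot_cross_l u v : dot u (cross u v) = 0.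
Proof. by rewrite /dot sum_ord7 !crossE /= /wedge; ring. Qed.

Lemma dot_cross_r u v : dot v (cross u v) = 0.
Proof. by rewrite /dot sum_ord7 !crossE /= /wedge; ring. Qed.

Lemma dot_cross_cross u v :
  dot (cross u v) (cross u v) = dot u u * dot v v - dot u v ^+ 2.
Proof. by rewrite /dot !sum_ord7 !crossE /= /wedge; ring. Qed.

Lemma cross_crossr u v : cross v (cross u v) = dot v v *: u - dot u v *: v.
Proof.
apply/rowP => k; rewrite crossE !mxE /dot !sum_ord7.
by elim/ord7_ind: k; rewrite /= /wedge !crossE /= /wedge; ring.
Qed.

Lemma cross_crossl u v : cross (cross u v) u = dot u u *: v - dot u v *: u.
Proof.
apply/rowP => k; rewrite crossE !mxE /dot !sum_ord7.
by elim/ord7_ind: k; rewrite /= /wedge !crossE /= /wedge; ring.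
Qed.

End VectorAlgebra.

Section Brackets.
Variables (R : realType) (n : nat).
Implicit Types A B C : 'M[R]_n.

Lemma lieDl A B C : lie (A + B) C = lie A C + lie B C.
Proof. by rewrite /lie mulmxDl mulmxDr opprD addrACA. Qed.

Lemma lieDr A B C : lie A (B + C) = lie A B + lie A C.
Proof. by rewrite /lie mulmxDl mulmxDr opprD addrACA. Qed.

Lemma lieZl a A B : lie (a *: A) B = a *: lie A B.
Proof. by rewrite /lie scalerBr -scalemxAl -scalemxAr. Qed.

Lemma lieZr a A B : lie A (a *: B) = a *: lie A B.
Proof. by rewrite /lie scalerBr -scalemxAl -scalemxAr. Qed.

Lemma lie_anticomm A B : lie A B = - lie B A.
Proof. by rewrite /lie opprB. Qed.

Lemma liexx A : lie A A = 0.
Proof. exact: subrr. Qed.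

Lemma lie_skew A B : A^T = - A -> B^T = - B -> (lie A B)^T = - lie A B.
Proof. by move=> skA skB; rewrite linearB /= !trmx_mul skA skB !mulNmx !mulmxN !opprK opprB. Qed.

Lemma skew_mxE A : A^T = - A -> forall i j, A i j = - A j i.
Proof. by move=> skA i j; have := congr1 (fun M : 'M_n => M j i) skA; rewrite !mxE. Qed.

Lemma skew_mx_eq A B : A^T = - A -> B^T = - B ->
  (forall i j : 'I_n, (i < j)%N -> A i j = B i j) -> A = B.
Proof.
move=> /skew_mxE skA /skew_mxE skB eqAB; apply/matrixP => i j.
case: (ltngtP i j) => [ij | ji | /val_inj <-]; first exact: eqAB.
  by rewrite skA skB eqAB.
by have := skA i i; have := skB i i; lra.
Qed.

End Brackets.

Section PsiIdentities.
Variable R : realType.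
Implicit Types u v x y z : 'rV[R]_7.

Lemma Psi_skew u v : (Psi u v)^T = - Psi u v.
Proof.
apply/matrixP => i j; rewrite mxE [RHS]mxE !PsiE !mxE /Psi_coord.
by case: ltngtP => //= _; rewrite ?opprK ?oppr0.
Qed.

Lemma Psi_combination a1 a2 a3 b1 b2 b3 x y z :
  Psi (a1 *: x + a2 *: y + a3 *: z) (b1 *: x + b2 *: y + b3 *: z) =
  (a2 * b3 - a3 * b2) *: Psi y z + (a3 * b1 - a1 * b3) *: Psi z x
  + (a1 * b2 - a2 * b1) *: Psi x y.
Proof.
rewrite !PsiE; apply/matrixP => i j; rewrite !mxE /Psi_coord /Psi_upper /wedge !mxE.
by elim/ord7_ind: i; elim/ord7_ind: j; rewrite /=; ring.
Qed.

Lemma mxtrace_Psi_sqr u v :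
  \tr (Psi u v *m Psi u v) = - 4 * (dot u u * dot v v - dot u v ^+ 2).
Proof.
rewrite PsiE /mxtrace /dot !sum_ord7 !mxE !sum_ord7 !mxE /Psi_coord /= /wedge.
ring.
Qed.

Lemma lie_Psi_cross u v :
  lie (Psi v (cross u v)) (Psi (cross u v) u) =
  (2 * (dot u u * dot v v - dot u v ^+ 2)) *: Psi u v.
Proof.
apply: skew_mx_eq; first by apply: lie_skew; apply: Psi_skew.
  by rewrite linearZ /= Psi_skew scalerN.
move=> i j; rewrite /lie !PsiE !mxE !sum_ord7 !mxE /dot !sum_ord7.
by elim/ord7_ind: i; elim/ord7_ind: j => //= _;
  rewrite /Psi_coord /= /wedge !crossE /= /wedge; ring.
Qed.

End PsiIdentities.

Section So3.
Variable R : realType.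

Definition hat (a b c : R) : 'M[R]_3 :=
  \matrix_(i, j) nth 0 (nth [::] [:: [:: 0; - c; b]; [:: c; 0; - a]; [:: - b; a; 0]] i) j.

Lemma hat_so3 a b c : so3 (hat a b c).
Proof.
by apply/matrixP => i j; rewrite !mxE; elim/ord3_ind: i; elim/ord3_ind: j;
  rewrite /= ?opprK ?oppr0.
Qed.

Lemma so3_hat X : so3 X -> X = hat (X q2 q1) (X q0 q2) (X q1 q0).
Proof.
move=> /skew_mxE skX; apply/matrixP => i j; rewrite mxE.
elim/ord3_ind: i; elim/ord3_ind: j => /=; rewrite -?skX //;
  by have := skX q0 q0; have := skX q1 q1; have := skX q2 q2; lra.
Qed.

Lemma lie_hat a b c a' b' c' :
  lie (hat a b c) (hat a' b' c') =
  hat (b * c' - c * b') (c * a' - a * c') (a * b' - b * a').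
Proof.
apply/matrixP => i j; rewrite !mxE !sum_ord3 !mxE.
by elim/ord3_ind: i; elim/ord3_ind: j; rewrite /=; ring.
Qed.

End So3.

Section So3Triple.
Variables (R : realType) (n : nat) (A1 A2 A3 : 'M[R]_n).

Definition comb3 (a b c : R) : 'M[R]_n := a *: A1 + b *: A2 + c *: A3.

Lemma comb3D a b c a' b' c' :
  comb3 a b c + comb3 a' b' c' = comb3 (a + a') (b + b') (c + c').
Proof. by apply/matrixP => i j; rewrite !mxE; ring. Qed.

Lemma comb3B a b c a' b' c' :
  comb3 a b c - comb3 a' b' c' = comb3 (a - a') (b - b') (c - c').
Proof. by apply/matrixP => i j; rewrite !mxE; ring. Qed.

Hypotheses (lie12 : lie A1 A2 = 2 *: A3) (lie23 : lie A2 A3 = 2 *: A1)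
  (lie31 : lie A3 A1 = 2 *: A2).

Lemma lie_comb3 a b c a' b' c' :
  lie (comb3 a b c) (comb3 a' b' c') =
  comb3 (2 * (b * c' - c * b')) (2 * (c * a' - a * c')) (2 * (a * b' - b * a')).
Proof.
rewrite /comb3 !lieDl !lieDr !lieZl !lieZr !liexx.
rewrite (lie_anticomm A2 A1) (lie_anticomm A3 A2) (lie_anticomm A1 A3) lie12 lie23 lie31.
by apply/matrixP => i j; rewrite !mxE; ring.
Qed.

Hypothesis A1_neq0 : A1 != 0.

(* Bracketing twice, first with A1, isolates the coefficient b (with A2) or
   c (with A3) in front of A1. *)
Lemma comb3_eq0 a b c : comb3 a b c = 0 -> [/\ a = 0, b = 0 & c = 0].
Proof.
have lie0 X : lie X 0 = 0 by rewrite /lie mulmx0 mul0mx subrr.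
have A1_coef k : comb3 k 0 0 = 0 -> k = 0.
  rewrite /comb3 !scale0r !addr0 => /eqP.
  by rewrite scaler_eq0 (negbTE A1_neq0) orbF => /eqP.
have A1E : A1 = comb3 1 0 0 by rewrite /comb3 scale1r !scale0r !addr0.
have A2E : A2 = comb3 0 1 0 by rewrite /comb3 scale1r !scale0r add0r addr0.
have A3E : A3 = comb3 0 0 1 by rewrite /comb3 scale1r !scale0r !add0r.
move=> abc0.
have b0 : b = 0.
  have : lie A2 (lie A1 (comb3 a b c)) = comb3 (4 * b) 0 0.
    by rewrite A2E A1E !lie_comb3; congr comb3; ring.
  by rewrite abc0 !lie0 => /esym/A1_coef; lra.
have c0 : c = 0.
  have : lie A3 (lie A1 (comb3 a b c)) = comb3 (4 * c) 0 0.
    by rewrite A3E A1E !lie_comb3; congr comb3; ring.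
  by rewrite abc0 !lie0 => /esym/A1_coef; lra.
by split=> //; move: abc0; rewrite b0 c0 => /A1_coef.
Qed.

(* The basis L1 = hat 1 0 0, L2, L3 of so(3) satisfies [L1, L2] = L3, while
   [A1, A2] = 2 A3; hence L_i is sent to A_i / 2. *)
Definition so3_map (X : 'M[R]_3) : 'M[R]_n :=
  comb3 (X q2 q1 / 2) (X q0 q2 / 2) (X q1 q0 / 2).

Lemma so3_map_hat a b c : so3_map (hat a b c) = comb3 (a / 2) (b / 2) (c / 2).
Proof. by rewrite /so3_map !mxE. Qed.

Theorem so3_triple_iso (S : 'M[R]_n -> Prop) :
  (forall Z, S Z <-> exists a b c, Z = comb3 a b c) ->
  (forall X Y, S X -> S Y -> S (lie X Y)) /\
  (exists f : 'M[R]_3 -> 'M[R]_n,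
     (forall (a : R) X Y, f (a *: X + Y) = a *: f X + f Y) /\
     (forall X, so3 X -> S (f X)) /\
     (forall X Y, so3 X -> so3 Y -> f X = f Y -> X = Y) /\
     (forall Z, S Z -> exists X, so3 X /\ f X = Z) /\
     (forall X Y, so3 X -> so3 Y -> f (lie X Y) = lie (f X) (f Y))).
Proof.
move=> spanS; split.
  move=> X Y /spanS [a [b [c ->]]] /spanS [a' [b' [c' ->]]].
  by apply/spanS; rewrite lie_comb3; do 3 eexists.
exists so3_map; split; [|split; [|split; [|split]]].
- by move=> a X Y; apply/matrixP => i j; rewrite !mxE; ring.
- by move=> X _; apply/spanS; do 3 eexists.
- move=> X Y /so3_hat -> /so3_hat ->; rewrite !so3_map_hat => /eqP.
  rewrite -subr_eq0 comb3B => /eqP/comb3_eq0 [? ? ?].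
  by congr hat; lra.
- move=> Z /spanS [a [b [c ->]]]; exists (hat (2 * a) (2 * b) (2 * c)).
  by split; [exact: hat_so3 | rewrite so3_map_hat; congr comb3; field].
- move=> X Y /so3_hat -> /so3_hat ->.
  by rewrite lie_hat !so3_map_hat lie_comb3; congr comb3; field.
Qed.

End So3Triple.

Section Frames.
Variable R : realType.
Implicit Types (P : 'M[R]_7) (x : 'rV[R]_7).

Lemma mulmx_trE m p (A : 'M[R]_(m, 7)) (B : 'M[R]_(p, 7)) i j :
  (A *m B^T) i j = dot (row i A) (row j B).
Proof. by rewrite !mxE; apply: eq_bigr => k _; rewrite !mxE. Qed.

Lemma not_submx_row P x : (1 < \rank P)%N -> ~~ (P <= x)%MS.
Proof.
by move=> rP; apply/negP => /mxrankS; rewrite leqNgt (leq_ltn_trans (rank_leq_row x) rP).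
Qed.

Lemma exists_unit_orthogonal P x : (x <= P)%MS -> ~~ (P <= x)%MS ->
  exists2 e, (e <= P)%MS & dot e e = 1 /\ dot x e = 0.
Proof.
move=> xP /row_subPn [i rx].
pose y := row i P - (dot (row i P) x / dot x x) *: x.
have yP : (y <= P)%MS by rewrite addmx_sub ?row_sub // -scaleNr scalemx_sub.
have y_neq0 : y != 0.
  by apply: contraNneq rx => /subr0_eq ->; rewrite scalemx_sub.
have x_y : dot x y = 0.
  have [->|x_neq0] := eqVneq x 0; first by rewrite /dot big1 // => k _; rewrite mxE mul0r.
  by rewrite dotC dotBl dotZl divfK ?subrr ?dot_eq0.
exists ((Num.sqrt (dot y y))^-1 *: y); first exact: scalemx_sub.
by rewrite dot_normalize // dotZr x_y mulr0.
Qed.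

Lemma orthonormal_rows_expansion k (E : 'M[R]_(k, 7)) P x :
  E *m E^T = 1%:M -> (E <= P)%MS -> \rank P = k -> (x <= P)%MS -> x = x *m E^T *m E.
Proof.
move=> EET EP rP xP.
have rE : \rank E = k.
  have := mxrankM_maxl E E^T; rewrite EET mxrank1 => kE.
  by apply/eqP; rewrite eqn_leq rank_leq_row kE.
have /submxP [c ->] : (x <= E)%MS.
  by apply: submx_trans xP _; rewrite -(mxrank_leqif_sup EP).2 rE rP.
by rewrite -(mulmxA c) EET mulmx1.
Qed.

End Frames.

Section OrthonormalPair.
Variables (R : realType) (e1 e2 : 'rV[R]_7).
Hypotheses (e1_unit : dot e1 e1 = 1) (e2_unit : dot e2 e2 = 1) (e1_e2 : dot e1 e2 = 0).
Local Notation e3 := (cross e1 e2).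

Lemma cross_unit : dot e3 e3 = 1.
Proof. by rewrite dot_cross_cross e1_unit e2_unit e1_e2 expr0n subr0 mulr1. Qed.

Lemma cross_e2_e3 : cross e2 e3 = e1.
Proof. by rewrite cross_crossr e2_unit e1_e2 scale1r scale0r subr0. Qed.

Lemma cross_e3_e1 : cross e3 e1 = e2.
Proof. by rewrite cross_crossl e1_unit e1_e2 scale1r scale0r subr0. Qed.

Lemma lie_Psi_frame :
  [/\ lie (Psi e2 e3) (Psi e3 e1) = 2 *: Psi e1 e2,
      lie (Psi e3 e1) (Psi e1 e2) = 2 *: Psi e2 e3 &
      lie (Psi e1 e2) (Psi e2 e3) = 2 *: Psi e3 e1].
Proof.
have e2_e3 : dot e2 e3 = 0 := dot_cross_r e1 e2.
have e3_e1 : dot e3 e1 = 0 by rewrite dotC dot_cross_l.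
have unit_pair x y : dot x x = 1 -> dot y y = 1 -> dot x y = 0 ->
    2 * (dot x x * dot y y - dot x y ^+ 2) = 2 :> R.
  by move=> -> -> ->; rewrite expr0n subr0 !mulr1.
split.
- by rewrite lie_Psi_cross unit_pair.
- by have := lie_Psi_cross e2 e3; rewrite cross_e2_e3 unit_pair ?cross_unit.
- by have := lie_Psi_cross e3 e1; rewrite cross_e3_e1 unit_pair ?cross_unit.
Qed.

Lemma Psi_frame_neq0 : Psi e2 e3 != 0.
Proof.
apply/eqP => Psi0; have := mxtrace_Psi_sqr e2 e3.
rewrite Psi0 mul0mx mxtrace0 e2_unit cross_unit dot_cross_r expr0n subr0 !mulr1.
by move=> /eqP; rewrite eq_sym oppr_eq0 pnatr_eq0.
Qed.

Lemma frame_expansion (P : 'M[R]_7) :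
  (e1 <= P)%MS -> (e2 <= P)%MS -> (e3 <= P)%MS -> \rank P = 3%N ->
  forall x, (x <= P)%MS -> x = dot x e1 *: e1 + dot x e2 *: e2 + dot x e3 *: e3.
Proof.
move=> e1P e2P e3P rP x xP.
pose E := \matrix_(i < 3) nth 0 [:: e1; e2; e3] i.
have EET : E *m E^T = 1%:M.
  have e3_unit := cross_unit.
  have e1_e3 : dot e1 e3 = 0 := dot_cross_l e1 e2.
  have e2_e3 : dot e2 e3 = 0 := dot_cross_r e1 e2.
  apply/matrixP => i j; rewrite mulmx_trE !rowK mxE.
  by elim/ord3_ind: i; elim/ord3_ind: j; rewrite /= // dotC.
have EP : (E <= P)%MS by apply/row_subP => i; rewrite rowK; elim/ord3_ind: i.
rewrite [LHS](orthonormal_rows_expansion EET EP rP xP) mulmx_sum_row sum_ord3.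
by rewrite !mulmx_trE !row_id !rowK.
Qed.

Lemma PsiSpan_frame (P : 'M[R]_7) :
  (e1 <= P)%MS -> (e2 <= P)%MS -> (e3 <= P)%MS -> \rank P = 3%N ->
  forall Z, PsiSpan P Z <-> exists a b c, Z = comb3 (Psi e2 e3) (Psi e3 e1) (Psi e1 e2) a b c.
Proof.
move=> e1P e2P e3P rP Z; have expandP := frame_expansion e1P e2P e3P rP.
split.
  case=> m [c [u [v [uvP ->]]]].
  apply: (big_ind (fun Z => exists a b c, Z = comb3 (Psi e2 e3) (Psi e3 e1) (Psi e1 e2) a b c)).
  - by exists 0, 0, 0; rewrite /comb3 !scale0r !addr0.
  - move=> _ _ [a [b [c' ->]]] [a' [b' [c'' ->]]].
    by rewrite comb3D; do 3 eexists.
  move=> i _; have [uP vP] := uvP i.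
  rewrite (expandP _ uP) (expandP _ vP) Psi_combination.
  by do 3 eexists; rewrite /comb3 !scalerDr !scalerA.
case=> a [b [c ->]].
exists 3, (fun i => nth 0 [:: a; b; c] i), (fun i => nth 0 [:: e2; e3; e1] i),
  (fun i => nth 0 [:: e3; e1; e2] i).
by split; [elim/ord3_ind | rewrite sum_ord3].
Qed.

End OrthonormalPair.

Theorem proposition4p5 (R : realType) (P : 'M[R]_7) :
  associative_plane P ->
  (* Psi(P) is closed under the bracket (a Lie subalgebra) *)
  (forall X Y, PsiSpan P X -> PsiSpan P Y -> PsiSpan P (lie X Y)) /\
  (* and there is a Lie algebra isomorphism so(3) -> Psi(P)
     (in particular Psi(P) is 3-dimensional) *)
  (exists f : 'M[R]_3 -> 'M[R]_7,
     (forall (a : R) X Y, f (a *: X + Y) = a *: f X + f Y) /\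
     (forall X, so3 X -> PsiSpan P (f X)) /\
     (forall X Y, so3 X -> so3 Y -> f X = f Y -> X = Y) /\
     (forall Z, PsiSpan P Z -> exists X, so3 X /\ f X = Z) /\
     (forall X Y, so3 X -> so3 Y -> f (lie X Y) = lie (f X) (f Y))).
Proof.
case=> rankP crossP.
have rank_gt1 : (1 < \rank P)%N by rewrite rankP.
have [e1 e1P [e1_unit _]] := exists_unit_orthogonal (sub0mx 1 P) (not_submx_row 0 rank_gt1).
have [e2 e2P [e2_unit e1_e2]] := exists_unit_orthogonal e1P (not_submx_row e1 rank_gt1).
have [lie12 lie23 lie31] := lie_Psi_frame e1_unit e2_unit e1_e2.
have PsiSpanE := PsiSpan_frame e1_unit e2_unit e1_e2 e1P e2P (crossP _ _ e1P e2P) rankP.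
apply: (so3_triple_iso lie12 lie23 lie31 (Psi_frame_neq0 e1_unit e2_unit e1_e2)).
exact: PsiSpanE.
Qed.
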